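(* Let $q$ be a prime power, $6\le n\le q$, $\alpha_1,\dots,\alpha_n\in\mathbb{F}_q$ distinct, $u_1,\dots,u_n\in\mathbb{F}_q^*$, and $H\in\mathbb{F}_q^{5\times n}$ with $H_{ab}=u_b\alpha_b^{a-1}$ (so $\ker H$ has distance $6$). Then the number of $e\in\mathbb{F}_q^n$ with $|e|=3$ for which there exists $e'\in\mathbb{F}_q^n$, $e'\ne e$, $|e'|\le 3$, $He'=He$, is at most $$\frac{(n-3)(n-4)(n-5)}{6(q-1)^2}\cdot(q-1)^3\binom{n}{3}.$$
   Context: $|e|$ denotes the Hamming weight of $e\in\mathbb{F}_q^n$. *)

From mathcomp Require Import all_boot all_order all_algebra.
Set Implicit Arguments. Unset Strict Implicit. Unset Printing Implicit Defensive.
Import Order.TTheory GRing.Theory Num.Theory.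
Local Open Scope ring_scope.

Definition hwt (F : fieldType) (n : nat) (e : 'cV[F]_n) : nat :=
  #|[set i : 'I_n | e i ord0 != 0]|.

(* The 5 x n parity-check matrix H_{ab} = u_b * alpha_b^(a-1) (rows indexed from 0) *)
Definition grsH (F : fieldType) (n : nat) (alpha u : 'I_n -> F) : 'M[F]_(5, n) :=
  \matrix_(a < 5, b < n) (u b * alpha b ^+ a).

From mathcomp Require Import all_boot all_order all_algebra.
From mathcomp Require Import zify ring.
Set Implicit Arguments. Unset Strict Implicit. Unset Printing Implicit Defensive.
Import Order.TTheory GRing.Theory Num.Theory.
Local Open Scope ring_scope.

(* The kernel of H has minimum distance 6 (pairing a kernel vector of weight <= 5 with
   a polynomial of degree <= 4 vanishing at all but one point of its support kills
   the remaining coordinate), so two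
   distinct vectors of weight <= 3 with the same syndrome have disjoint supports,
   each of size exactly 3.  Such an e is then determined by supp e, the support of
   one partner e', and one coordinate of e: two candidates with the same data give
   a kernel vector (e1 - e1') - (e2 - e2') supported on the 5 remaining positions.
   Hence there are at most C(n,3) C(n-3,3) (q-1) of them, which is the stated bound
   since 6 C(n-3,3) = (n-3)(n-4)(n-5). *)

Definition supp (F : fieldType) n (x : 'cV[F]_n) := [set i : 'I_n | x i ord0 != 0].

Lemma hwtE (F : fieldType) n (x : 'cV[F]_n) : hwt x = #|supp x|.
Proof. by []. Qed.

Lemma nsupp_coef (F : fieldType) n (x : 'cV[F]_n) i : i \notin supp x -> x i ord0 = 0.
Proof. by rewrite inE negbK => /eqP. Qed.

Lemma supp_sub (F : fieldType) n (x y : 'cV[F]_n) :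
  supp (x - y) \subset supp x :|: supp y.
Proof.
apply/subsetP => i; rewrite !inE !mxE; apply: contraR.
by rewrite negb_or !negbK => /andP[/eqP-> /eqP->]; rewrite subrr.
Qed.

Definition gvdm (F : fieldType) k n (alpha u : 'I_n -> F) : 'M[F]_(k, n) :=
  \matrix_(a < k, b < n) (u b * alpha b ^+ a).

Lemma grsHE (F : fieldType) n (alpha u : 'I_n -> F) : grsH alpha u = gvdm 5 alpha u.
Proof. by []. Qed.

Lemma gvdm_ker_wt (F : fieldType) k n (alpha u : 'I_n -> F) (x : 'cV[F]_n) :
  injective alpha -> (forall b, u b != 0) ->
  gvdm k alpha u *m x = 0 -> (hwt x <= k)%N -> x = 0.
Proof.
move=> alpha_inj u_neq0 Hx wt_x; apply/matrixP => j o; rewrite (ord1 o) mxE.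
have [j_supp|] := boolP (j \in supp x); last exact: nsupp_coef.
pose p := \prod_(a <- [seq alpha i | i <- enum (supp x :\ j)]) ('X - a%:P).
have size_p : (size p <= k)%N.
  rewrite size_prod_XsubC size_map -cardE.
  by move: wt_x; rewrite hwtE (cardsD1 j (supp x)) j_supp.
have p_root b : b != j -> x b ord0 * p.[alpha b] = 0.
  move=> bj; have [b_supp|/nsupp_coef->] := boolP (b \in supp x); last exact: mul0r.
  suff /eqP-> : root p (alpha b) by rewrite mulr0.
  by rewrite root_prod_XsubC map_f // mem_enum in_setD1 bj.
have p_nroot : p.[alpha j] != 0.
  by rewrite -rootE root_prod_XsubC (mem_map alpha_inj) mem_enum !inE eqxx.
(* Expanding p in the monomial basis, this sum is a combination of the rows of [H x]. *)
have Hp : \sum_b x b ord0 * (u b * p.[alpha b]) = 0.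
  transitivity (\sum_(a < k) p`_a * (gvdm k alpha u *m x) a ord0).
    under eq_bigr => b _ do rewrite (horner_coef_wide _ size_p) mulr_sumr mulr_sumr.
    rewrite exchange_big /=; apply: eq_bigr => a _.
    rewrite mxE mulr_sumr; apply: eq_bigr => b _; rewrite mxE; ring.
  by rewrite Hx big1 // => a _; rewrite mxE mulr0.
rewrite (bigD1 j) //= big1 ?addr0 in Hp; last first.
  by move=> b /p_root; rewrite mulrCA => ->; rewrite mulr0.
by move/eqP: Hp; rewrite !mulf_eq0 (negbTE (u_neq0 j)) (negbTE p_nroot) !orbF => /eqP.
Qed.

Lemma card_disjoint_pairs n t :
  #|[set X : {set 'I_n} * {set 'I_n} |
      [&& #|X.1| == t, X.2 \subset ~: X.1 & #|X.2| == t]]| = ('C(n, t) * 'C(n - t, t))%N.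
Proof.
rewrite -sum1_card (eq_bigl (fun X : {set 'I_n} * {set 'I_n} =>
  (#|X.1| == t) && ((X.2 \subset ~: X.1) && (#|X.2| == t)))); last by move=> X; rewrite inE.
rewrite -(pair_big_dep (fun A : {set 'I_n} => #|A| == t)
   (fun A (B : {set 'I_n}) => (B \subset ~: A) && (#|B| == t)) (fun _ _ => 1%N)) /=.
rewrite (eq_bigr (fun _ => 'C(n - t, t))); last first.
  move=> A /eqP card_A; rewrite sum1_card.
  transitivity #|[set B : {set 'I_n} | B \subset ~: A & #|B| == t]|.
    by apply: eq_card => B; rewrite !inE.
  by rewrite cards_draws cardsCs setCK card_ord card_A.
rewrite (eq_bigl (fun A => A \in [set A : {set 'I_n} | #|A| == t])); last by move=> A; rewrite inE.
by rewrite sum_nat_const card_draws card_ord mulnC.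
Qed.

Lemma bin3_mul6 m : ('C(m, 3) * 6 = m * (m - 1) * (m - 2))%N.
Proof.
rewrite (_ : 6 = 3`!)%N // bin_ffact !ffactnS ffactn0 muln1 mulnA.
by congr (_ * _ * _)%N; lia.
Qed.

Section WeightCollisions.

Variables (F : finFieldType) (m n t : nat) (H : 'M[F]_(m, n)).
Hypothesis t_gt0 : (0 < t)%N.
Hypothesis H_dist : forall x : 'cV[F]_n, H *m x = 0 -> (hwt x < t.*2)%N -> x = 0.

Definition collides (e e' : 'cV[F]_n) :=
  [&& e' != e, (hwt e' <= t)%N & H *m e' == H *m e].

Lemma collides_supp e e' : hwt e = t -> collides e e' ->
  #|supp e'| = t /\ [disjoint supp e & supp e'].
Proof.
move=> wt_e /and3P[e'_neq wt_e' /eqP He'].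
have wt_diff : (t.*2 <= hwt (e - e'))%N.
  rewrite leqNgt; apply: contra e'_neq => wt_diff.
  by rewrite eq_sym -subr_eq0 (H_dist (x := e - e')) // mulmxBr He' subrr.
have := leq_trans wt_diff (subset_leq_card (supp_sub e e')); rewrite cardsU.
have := subset_leq_card (subsetIr (supp e) (supp e')).
move: wt_e wt_e'; rewrite -addnn !hwtE -setI_eq0 -cards_eq0.
split; lia.
Qed.

Lemma collides_inj e1 e2 w1 w2 i :
  hwt e1 = t -> collides e1 w1 -> collides e2 w2 ->
  supp e1 = supp e2 -> supp w1 = supp w2 ->
  i \in supp e1 -> e1 i ord0 = e2 i ord0 -> e1 = e2.
Proof.
move=> wt1 c1 c2 supp_e supp_w i_supp e_i.
have [card_w1 dis1] := collides_supp wt1 c1.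
move: c1 c2 => /and3P[_ _ /eqP He1] /and3P[_ _ /eqP He2].
have w_out j : j \in supp e1 -> (j \notin supp w1) && (j \notin supp w2).
  by move=> j_e; rewrite (disjointFr dis1 j_e) -supp_w (disjointFr dis1 j_e).
pose d := (e1 - w1) - (e2 - w2).
have supp_d : supp d \subset (supp e1 :|: supp w1) :\ i.
  apply/subsetP => j; rewrite !inE !mxE; have [->|_] /= := eqVneq j i.
    have /andP[/nsupp_coef-> /nsupp_coef->] := w_out i i_supp.
    by rewrite e_i !subr0 subrr eqxx.
  apply: contraR; rewrite negb_or !negbK => /andP[/eqP e1j /eqP w1j].
  rewrite (nsupp_coef (_ : j \notin supp e2)) ?(nsupp_coef (_ : j \notin supp w2)).
  - by rewrite e1j w1j !subr0.
  - by rewrite -supp_w inE w1j eqxx.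
  - by rewrite -supp_e inE e1j eqxx.
have d0 : d = 0.
  apply: H_dist; first by rewrite !mulmxBr He1 He2 !subrr.
  apply: leq_ltn_trans (subset_leq_card supp_d) _.
  have dis_I : supp e1 :&: supp w1 = set0 by apply/eqP; rewrite setI_eq0.
  have := cardsD1 i (supp e1 :|: supp w1).
  rewrite inE i_supp cardsU card_w1 -hwtE wt1 dis_I cards0 -addnn; lia.
apply/matrixP => j o; rewrite (ord1 o).
have := congr1 (fun x : 'cV[F]_n => x j ord0) d0; rewrite /d !mxE.
have [j_w1|j_w1] := boolP (j \in supp w1).
  have j_e1 : j \notin supp e1 by rewrite (disjointFl dis1 j_w1).
  have j_e2 : j \notin supp e2 by rewrite -supp_e.
  by rewrite (nsupp_coef j_e1) (nsupp_coef j_e2).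
have j_w2 : j \notin supp w2 by rewrite -supp_w.
by rewrite (nsupp_coef j_w1) (nsupp_coef j_w2) !subr0 => /eqP; rewrite subr_eq0 => /eqP.
Qed.

Lemma card_weight_collisions :
  (#|[set e : 'cV[F]_n | (hwt e == t) && [exists e', collides e e']]|
     <= 'C(n, t) * 'C(n - t, t) * (#|F| - 1))%N.
Proof.
set E := [set e | _].
have [->|[e0 Ee0]] := set_0Vmem E; first by rewrite cards0.
have memE e : e \in E -> hwt e = t /\ exists e', collides e e'.
  by rewrite inE => /andP[/eqP wt /existsP].
pose partner e := odflt e [pick e' | collides e e'].
have partnerP e : e \in E -> collides e (partner e).
  move=> /memE[_ [e' c]]; rewrite /partner.
  by case: pickP => [//| /(_ e')]; rewrite c.
have [i0 _] : {i0 | i0 \in supp e0}.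
  by apply/sigW/card_gt0P; rewrite -hwtE (memE _ Ee0).1.
pose pivot (e : 'cV[F]_n) := odflt i0 [pick i in supp e].
have pivotP e : e \in E -> pivot e \in supp e.
  move=> /memE[wt _]; rewrite /pivot; case: pickP => [//| none].
  by move: t_gt0; rewrite -wt hwtE (eq_card0 none).
pose f e := (supp e, supp (partner e), e (pivot e) ord0).
have f_inj : {in E &, injective f}.
  move=> e1 e2 E1 E2 [supp_e supp_w e_i].
  apply: (collides_inj (memE _ E1).1 (partnerP _ E1) (partnerP _ E2) supp_e supp_w
                       (pivotP _ E1)).
  by rewrite e_i /pivot supp_e.
rewrite -(card_in_imset f_inj) -card_disjoint_pairs subn1 -(cardsC1 (0 : F)) -cardsX.
apply/subset_leq_card/subsetP => _ /imsetP[e Ee ->].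
have [wt_e _] := memE _ Ee.
have [card_w dis] := collides_supp wt_e (partnerP _ Ee).
have := pivotP _ Ee; rewrite !inE /= -hwtE wt_e card_w !eqxx.
by rewrite -disjoints_subset disjoint_sym dis.
Qed.

End WeightCollisions.

Theorem mainTheorem11 (F : finFieldType) (n : nat)
  (alpha u : 'I_n -> F) :
  (6 <= n)%N -> (n <= #|F|)%N ->
  injective alpha -> (forall b, u b != 0) ->
  let q := #|F| in
  let H := grsH alpha u in
  ((#|[set e : 'cV[F]_n | (hwt e == 3)%N &&
        [exists e' : 'cV[F]_n, [&& e' != e, (hwt e' <= 3)%N & H *m e' == H *m e]]]|)%:R
     : rat)
  <= ((n - 3) * (n - 4) * (n - 5))%:R / (6 * (q - 1) ^ 2)%:R
       * ((q - 1) ^ 3 * 'C(n, 3))%:R.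
Proof.
move=> n_ge6 n_le_q alpha_inj u_neq0; cbv zeta; set q := #|F|; set H := grsH alpha u.
have H_dist (x : 'cV[F]_n) : H *m x = 0 -> (hwt x < 3.*2)%N -> x = 0.
  by rewrite /H grsHE; exact: gvdm_ker_wt.
apply: le_trans (_ : ('C(n, 3) * 'C(n - 3, 3) * (q - 1))%N%:R <= _).
  by rewrite ler_nat (card_weight_collisions _ H_dist).
have -> : ((n - 3) * (n - 4) * (n - 5) = 'C(n - 3, 3) * 6)%N.
  by rewrite bin3_mul6; congr (_ * _ * _)%N; lia.
have q1_neq0 : (q - 1)%:R != 0 :> rat by rewrite pnatr_eq0 -lt0n /q; lia.
by rewrite !natrM le_eqVlt; apply/predU1l; field.
Qed.
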